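(* Let $n$ be a positive integer and let $x\neq y$ be integers with $0\le x,y\le n$. If there is a cracked graceful permutation of length $n$ with first element $x$ and last element $y$, then $|x-y|\equiv \lfloor n/2\rfloor \pmod 2$.
   Context: A cracked graceful permutation of length $n$ is an arrangement $(a_1,\dots,a_n)$ of $n$ distinct integers from $\{0,1,\dots,n\}$ such that its absolute differences $|a_{i+1}-a_i|$ ($1\le i\le n-1$) are exactly the integers $\{1,\dots,n-1\}$. *)

From mathcomp Require Import all_boot.
Set Implicit Arguments. Unset Strict Implicit. Unset Printing Implicit Defensive.

Definition absdiff (a b : nat) : nat := maxn a b - minn a b.

Definition diffs (s : seq nat) : seq nat :=
  [seq absdiff p.1 p.2 | p <- zip s (behead s)].

Definition cracked_graceful (n : nat) (s : seq nat) : Prop :=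
  [/\ size s = n, uniq s, all (fun a => a <= n) s
    & perm_eq (diffs s) (iota 1 n.-1)].

From mathcomp Require Import all_boot zify.

(* Modulo 2, |a - b| is a + b, so the differences of the sequence s telescope:
   their sum has the parity of head + last of s.  If s is cracked graceful,
   the differences are 1, ..., n-1, whose sum n(n-1)/2 has the parity of n/2. *)

Lemma odd_absdiff a b : odd (absdiff a b) = odd (a + b).
Proof.
have <- : absdiff a b + (minn a b).*2 = a + b by rewrite /absdiff; lia.
by rewrite oddD odd_double addbF.
Qed.

Lemma odd_sumn_diffs a t : odd (sumn (diffs (a :: t))) = odd (a + last a t).
Proof.
elim: t a => [|b t IH] a /=; first by rewrite addnn odd_double.
rewrite oddD odd_absdiff IH !oddD.
by rewrite addbA -(addbA (odd a)) addbb addbF.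
Qed.

Lemma odd_sumn_iota1 m : odd (sumn (iota 1 m)) = odd m.+1./2.
Proof.
elim: m => [|m IH] //.
rewrite -[m.+1 in LHS]addn1 iotaD sumn_cat /= addn0 oddD IH add1n.
have -> : m.+1./2 = odd m + m./2 := uphalf_half m.
by rewrite oddD oddb oddS addbN addbAC addbb.
Qed.

Theorem lemma5p11 (n x y : nat) (s : seq nat) :
  0 < n -> x != y -> x <= n -> y <= n ->
  cracked_graceful n s -> head 0 s = x -> last 0 s = y ->
  absdiff x y = n %/ 2 %[mod 2].
Proof.
move=> n_gt0 _ _ _ [size_s _ _ diffs_s] <- <-.
case: s size_s diffs_s => [|a t] /= size_s diffs_s; first by rewrite -size_s in n_gt0.
rewrite !modn2 divn2 odd_absdiff -odd_sumn_diffs (perm_sumn diffs_s).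
by rewrite odd_sumn_iota1 prednK.
Qed.
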